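(* Let $m,n\ge1$, $A\in\mathbb{R}^{m\times n}$, $\mathbf{u},\mathbf{l}\in\mathbb{R}^n$, $C$ a finite set of ReLU constraints and $\mathcal{T}$ a proof tree. If $\mathrm{check\_tree}(A,\mathbf{u},\mathbf{l},C,\mathcal{T})$ returns true, then the DNN verification query $\langle A,\mathbf{u},\mathbf{l},C\rangle$ has no solution, i.e. there is no $\mathbf{s}\in\mathbb{R}^n$ with $A\mathbf{s}=\mathbf{0}$, $\mathbf{l}\le\mathbf{s}\le\mathbf{u}$ and $\mathbf{s}$ satisfying every constraint in $C$.
   Context: For vectors, $\mathbf{l}\le\mathbf{x}\le\mathbf{u}$ means $l_j\le x_j\le u_j$ for all $j=1,\dots,n$. A ReLU constraint is a triple $(b,f,a)$ of indices in $\{1,\dots,n\}$; $\mathbf{s}\in\mathbb{R}^n$ satisfies it if $s_f=\max(s_b,0)$ and $s_f-s_b-s_a=0$. A proof tree is either $\mathrm{Leaf}(w)$ with $w$ a finite list of reals, or $\mathrm{Node}(\sigma,\mathcal{T}^L,\mathcal{T}^R)$ with $\mathcal{T}^L,\mathcal{T}^R$ proof trees and $\sigma$ a split, which is either $\mathrm{SingleVar}(i,k)$ ($i$ an index, $k\in\mathbb{R}$) or $\mathrm{Relu}(b,f,a)$ ($b,f,a$ indices). A split is valid w.r.t. $C$ if it is $\mathrm{SingleVar}(i,k)$ with $1\le i\le n$, or $\mathrm{Relu}(b,f,a)$ with $(b,f,a)\in C$ and $b,f,a$ pairwise distinct. For $\mathbf{v}\in\mathbb{R}^n$, $\mathbf{v}[i\mapsto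 k]$ replaces the $i$-th entry by $k$. $\mathrm{update\_bounds}(\mathbf{l},\mathbf{u},\sigma)$ returns $((\mathbf{l}^L,\mathbf{u}^L),(\mathbf{l}^R,\mathbf{u}^R))$: for $\sigma=\mathrm{SingleVar}(i,k)$, $\mathbf{l}^L=\mathbf{l}$, $\mathbf{u}^L=\mathbf{u}[i\mapsto k]$, $\mathbf{l}^R=\mathbf{l}[i\mapsto k]$, $\mathbf{u}^R=\mathbf{u}$; for $\sigma=\mathrm{Relu}(b,f,a)$, $\mathbf{l}^L=\mathbf{l}[f\mapsto0]$, $\mathbf{u}^L=\mathbf{u}[b\mapsto0][f\mapsto0]$, $\mathbf{l}^R=\mathbf{l}[b\mapsto0][a\mapsto0]$, $\mathbf{u}^R=\mathbf{u}[a\mapsto0]$. The leaf check $\mathrm{leafcheck}(A,\mathbf{u},\mathbf{l},w)$ is true iff $w\in\mathbb{R}^m$ and, writing $\gamma=w^\intercal A\in\mathbb{R}^n$, $\sum_{j:\gamma_j>0}\gamma_ju_j+\sum_{j:\gamma_j<0}\gamma_jl_j<0$. Then $\mathrm{check\_tree}(A,\mathbf{u},\mathbf{l},C,\mathrm{Leaf}(w))=\mathrm{leafcheck}(A,\mathbf{u},\mathbf{l},w)$, and $\mathrm{check\_tree}(A,\mathbf{u},\mathbf{l},C,\mathrm{Node}(\sigma,\mathcal{T}^L,\mathcal{T}^R))$ is true iff $\sigma$ is valid w.r.t. $C$ and both $\mathrm{check\_tree}(A,\mathbf{u}^L,\mathbf{l}^L,C,\mathcal{T}^L)$ and $\mathrm{check\_tree}(A,\mathbf{u}^R,\mathbf{l}^R,C,\mathcal{T}^R)$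 are true, with $((\mathbf{l}^L,\mathbf{u}^L),(\mathbf{l}^R,\mathbf{u}^R))=\mathrm{update\_bounds}(\mathbf{l},\mathbf{u},\sigma)$. *)

From HB Require Import structures.
From mathcomp Require Import all_boot all_order all_algebra.
From mathcomp Require Import reals.
Set Implicit Arguments. Unset Strict Implicit. Unset Printing Implicit Defensive.
Import Order.TTheory GRing.Theory Num.Theory.
Local Open Scope ring_scope.

(* Indices are 0-based: the paper's index i in {1..n} is i-1 here.
   Indices occurring in proof-tree splits are raw naturals (they may be out of
   range; validity of the split checks them). *)

Definition relu_sat (R : realType) (n : nat) (s : 'cV[R]_n)
  (c : 'I_n * 'I_n * 'I_n) : Prop :=
  let: (b, f, a) := c in
  s f 0 = Num.max (s b 0) 0 /\ s f 0 - s b 0 - s a 0 = 0.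

Inductive split (R : Type) :=
| SingleVar of nat & R
| Relu of nat & nat & nat.

Inductive proof_tree (R : Type) :=
| Leaf of seq R
| Node of split R & proof_tree R & proof_tree R.

Arguments SingleVar {R}.
Arguments Relu {R}.
Arguments Leaf {R}.
Arguments Node {R}.

(* v[i |-> k] ; a no-op if i is out of range *)
Definition upd (R : realType) (n : nat) (v : 'cV[R]_n) (i : nat) (k : R)
  : 'cV[R]_n :=
  \col_j (if (j : nat) == i then k else v j 0).

Definition valid_split (R : realType) (n : nat) (C : seq ('I_n * 'I_n * 'I_n))
  (sg : split R) : bool :=
  match sg with
  | SingleVar i _ => (i < n)%N
  | Relu b f a =>
      has (fun c : 'I_n * 'I_n * 'I_n =>
             [&& (c.1.1 : nat) == b, (c.1.2 : nat) == f & (c.2 : nat) == a]) C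
      && [&& b != f, b != a & f != a]
  end.

Definition update_bounds (R : realType) (n : nat) (l u : 'cV[R]_n)
  (sg : split R) : ('cV[R]_n * 'cV[R]_n) * ('cV[R]_n * 'cV[R]_n) :=
  match sg with
  | SingleVar i k => ((l, upd u i k), (upd l i k, u))
  | Relu b f a =>
      ((upd l f 0, upd (upd u b 0) f 0), (upd (upd l b 0) a 0, upd u a 0))
  end.

Definition leafcheck (R : realType) (m n : nat) (A : 'M[R]_(m, n))
  (u l : 'cV[R]_n) (w : seq R) : bool :=
  (size w == m) &&
  (let gamma := fun j : 'I_n => \sum_(i < m) w`_i * A i j in
   \sum_(j < n | gamma j > 0) gamma j * u j 0
   + \sum_(j < n | gamma j < 0) gamma j * l j 0 < 0).

Fixpoint check_tree (R : realType) (m n : nat) (A : 'M[R]_(m, n))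
  (u l : 'cV[R]_n) (C : seq ('I_n * 'I_n * 'I_n)) (T : proof_tree R) : bool :=
  match T with
  | Leaf w => leafcheck A u l w
  | Node sg TL TR =>
      let bnds := update_bounds l u sg in
      [&& valid_split C sg,
          check_tree A bnds.1.2 bnds.1.1 C TL
        & check_tree A bnds.2.2 bnds.2.1 C TR]
  end.

(* At a leaf, [w]
   is a Farkas certificate: any [s] with [A s = 0] satisfies [(w^T A) s = 0],
   whereas on the box [l <= s <= u] the linear form [(w^T A) s] is bounded by
   the negative number computed by the leaf check.  At a node, every solution
   in the current box lies in one of the two child boxes: for a single-variable
   split this is the case distinction [s_i <= k] or [k <= s_i], and for a ReLU
   split it is the distinction between the inactive phase ([s_b <= 0],
   [s_f = 0]) and the active phase ([0 <= s_b], [s_a = 0]). *)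
From Pilot Require Import Defs.
From HB Require Import structures.
From mathcomp Require Import all_boot all_order all_algebra.
From mathcomp Require Import reals.
Set Implicit Arguments. Unset Strict Implicit. Unset Printing Implicit Defensive.
Import Order.TTheory GRing.Theory Num.Theory.
Local Open Scope ring_scope.

Section Box.

Variables (R : realType) (n : nat).
Implicit Types (l u s : 'cV[R]_n) (j : 'I_n) (k : R).

Definition in_box l u s := forall j, l j 0 <= s j 0 <= u j 0.

Lemma updE (v : 'cV[R]_n) (i : nat) k j :
  upd v i k j 0 = if (j : nat) == i then k else v j 0.
Proof. by rewrite mxE. Qed.

Lemma in_box_upd_lower l u s j k :
  in_box l u s -> k <= s j 0 -> in_box (upd l j k) u s.
Proof.
move=> box ks i; rewrite updE; case: eqP => [/val_inj -> | _]; last exact: box.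
by rewrite ks; case/andP: (box j).
Qed.

Lemma in_box_upd_upper l u s j k :
  in_box l u s -> s j 0 <= k -> in_box l (upd u j k) s.
Proof.
move=> box sk i; rewrite updE; case: eqP => [/val_inj -> | _]; last exact: box.
by rewrite sk andbT; case/andP: (box j).
Qed.

Lemma linear_form_le_box (g : 'I_n -> R) l u s : in_box l u s ->
  \sum_j g j * s j 0 <=
  \sum_(j | g j > 0) g j * u j 0 + \sum_(j | g j < 0) g j * l j 0.
Proof.
move=> box; rewrite [X in _ <= X + _]big_mkcond [X in _ <= _ + X]big_mkcond.
rewrite -big_split /=.
apply: ler_sum => j _; have /andP [lj ju] := box j.
case: (ltrgtP (g j) 0) => g0.
- by rewrite add0r ler_wnM2l // ltW.
- by rewrite addr0 ler_wpM2l // ltW.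
- by rewrite g0 !mul0r addr0.
Qed.

End Box.

Lemma certificate_form_kernel (R : realType) (m n : nat) (A : 'M[R]_(m, n))
    (w : seq R) (s : 'cV[R]_n) :
  A *m s = 0 -> \sum_j (\sum_(i < m) w`_i * A i j) * s j 0 = 0.
Proof.
move=> As; under eq_bigr do rewrite mulr_suml.
rewrite exchange_big /=; apply: big1 => i _.
have Ais : \sum_j A i j * s j 0 = 0.
  by have := congr1 (fun M : 'cV[R]_m => M i 0) As; rewrite !mxE.
by under eq_bigr do rewrite -mulrA; rewrite -mulr_sumr Ais mulr0.
Qed.

Lemma leafcheck_infeasible (R : realType) (m n : nat) (A : 'M[R]_(m, n))
    (u l s : 'cV[R]_n) (w : seq R) :
  leafcheck A u l w -> A *m s = 0 -> ~ in_box l u s.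
Proof.
move=> /andP [_ neg] As box.
have := le_lt_trans (linear_form_le_box _ box) neg.
by rewrite certificate_form_kernel // ltxx.
Qed.

Lemma relu_phases (R : realType) (n : nat) (s : 'cV[R]_n) (b f a : 'I_n) :
  relu_sat s (b, f, a) ->
  (s b 0 <= 0 /\ s f 0 = 0) \/ (0 <= s b 0 /\ s a 0 = 0).
Proof.
case=> fmax fba; case: (lerP (s b 0) 0) => sb; [left | right].
  by rewrite fmax max_r.
split; first exact: ltW.
by move: fba; rewrite fmax max_l ?ltW // subrr sub0r => /eqP; rewrite oppr_eq0 => /eqP.
Qed.

(* [Defs.split] is qualified because fintype's [split] shadows it. *)
Lemma update_bounds_cover (R : realType) (n : nat) (C : seq ('I_n * 'I_n * 'I_n))
    (sg : Defs.split R) (l u s : 'cV[R]_n) :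
  valid_split C sg -> (forall c, c \in C -> relu_sat s c) -> in_box l u s ->
  let: ((lL, uL), (lR, uR)) := update_bounds l u sg in
  in_box lL uL s \/ in_box lR uR s.
Proof.
case: sg => [i k | b f a] /= valid sC box.
  have [si_k | k_si] := lerP (s (Ordinal valid) 0) k; [left | right].
    exact: (in_box_upd_upper (j := Ordinal valid)).
  exact: (in_box_upd_lower (j := Ordinal valid) box (ltW k_si)).
case/andP: valid => /hasP [[[b' f'] a'] c_in /and3P [/eqP <- /eqP <- /eqP <-]] _ /=.
case: (relu_phases (sC _ c_in)) => [[sb sf] | [sb sa]]; [left | right].
  apply: in_box_upd_lower; last by rewrite sf.
  by apply: in_box_upd_upper; [exact: in_box_upd_upper | rewrite sf].
apply: in_box_upd_upper; last by rewrite sa.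
by apply: in_box_upd_lower; [exact: in_box_upd_lower | rewrite sa].
Qed.

Lemma check_tree_sound (R : realType) (m n : nat) (A : 'M[R]_(m, n))
    (C : seq ('I_n * 'I_n * 'I_n)) (T : proof_tree R) (s : 'cV[R]_n) :
  A *m s = 0 -> (forall c, c \in C -> relu_sat s c) ->
  forall u l, check_tree A u l C T -> ~ in_box l u s.
Proof.
move=> As sC; elim: T => [w | sg TL IHL TR IHR] u l /=.
  by move=> leaf; exact: leafcheck_infeasible leaf As.
case/and3P=> valid checkL checkR box.
have := update_bounds_cover valid sC box.
case: (update_bounds l u sg) checkL checkR => [[lL uL] [lR uR]] /= checkL checkR.
by case; [exact: IHL | exact: IHR].
Qed.

Theorem mainTheorem8 (R : realType) (m n : nat) (hm : (0 < m)%N) (hn : (0 < n)%N)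
  (A : 'M[R]_(m, n)) (u l : 'cV[R]_n) (C : seq ('I_n * 'I_n * 'I_n))
  (T : proof_tree R) :
  check_tree A u l C T ->
  ~ (exists s : 'cV[R]_n,
        A *m s = 0 /\
        (forall j : 'I_n, l j 0 <= s j 0 <= u j 0) /\
        (forall c, c \in C -> relu_sat s c)).
Proof.
move=> check [s [As [box sC]]].
exact: check_tree_sound As sC u l check box.
Qed.
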